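(* Let $q$ be a prime power and $e,m$ positive integers with $q=em+1$. Let $a_0=1,a_1,\dots,a_{e-1}\in\mathbb{F}_q^*$ with $a_i\in D_i^e$ for each $i$, and let $M$ be the $e\times e$ matrix with entries $M_{ij}=a_{i-1}^{-1}a_{j-1}$ for $1\le i,j\le e$. Then the $e\times e$ block matrix whose $(i,j)$ block is $C_{M_{ij}}$ is the adjacency matrix of a directed strongly regular graph with parameters $(e(em+1),\ em,\ m,\ m-1,\ m)$.
   Context: Fix a primitive element $\gamma$ of $\mathbb{F}_q$; $D_i^e=\gamma^i\langle\gamma^e\rangle$, $i=0,\dots,e-1$, are the cyclotomic classes of order $e$. For $\sigma\in\mathbb{F}_q^*$, $C_\sigma$ is the $q\times q$ $0$-$1$ matrix with rows and columns indexed by $\mathbb{F}_q$ and $(C_\sigma)_{x,y}=1$ iff $x\in\sigma y+D_0^e$. A directed strongly regular graph with parameters $(v,k,t,\lambda,\mu)$ is a digraph (no loops, no multiple arcs) on $v$ vertices whose adjacency matrix $A$ satisfies $A^2=tI+\lambda A+\mu(J-I-A)$ and $AJ=JA=kJ$. *)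

From HB Require Import structures.
From mathcomp Require Import all_boot all_order all_algebra all_field.
Set Implicit Arguments. Unset Strict Implicit. Unset Printing Implicit Defensive.
Import GRing.Theory.
Local Open Scope ring_scope.

Definition is_dsrg (n : nat) (A : 'M[int]_n) (v k t lam mu : nat) : Prop :=
  let J : 'M[int]_n := const_mx 1 in
  let I : 'M[int]_n := 1%:M in
  v = n /\
  [/\ (forall i j, A i j = 0 \/ A i j = 1),
      (forall i, A i i = 0),
      A *m A = (t%:Z) *: I + (lam%:Z) *: A + (mu%:Z) *: (J - I - A),
      A *m J = (k%:Z) *: J
    & J *m A = (k%:Z) *: J].

Definition fmx (V : finType) (f : V -> V -> int) : 'M[int]_#|V| :=
  \matrix_(i, j) f (enum_val i) (enum_val j).

Definition cyc_class (F : finFieldType) (gamma : F) (e i : nat) : {set F} :=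
  [set x : F | [exists k : 'I_#|F|, x == gamma ^+ (i + e * k)]].

Definition Cmx (F : finFieldType) (gamma : F) (e : nat) (sigma : F) (x y : F) : int :=
  if (x - sigma * y) \in cyc_class gamma e 0 then 1 else 0.

(* e x e block matrix with (i,j) block C_{M_ij}, M_ij = a_i^{-1} a_j (0-indexed);
   rows/columns indexed by pairs (block index, field element). *)
Definition block_adj (F : finFieldType) (gamma : F) (e : nat) (a : 'I_e -> F)
  (u w : 'I_e * F) : int :=
  Cmx gamma e ((a u.1)^-1 * a w.1) u.2 w.2.

From HB Require Import structures.
From mathcomp Require Import all_boot all_order all_algebra all_field zify ring.
Import GRing.Theory.
Set Implicit Arguments. Unset Strict Implicit.
Local Open Scope ring_scope.

(* With [a_i \in D_i] and the cyclotomic index additive under multiplication,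
   [x - a_i^-1 a_l y \in D_0] iff [a_i x - a_l y \in D_i]; so rescaling block [l]
   by [a_l] turns the block matrix into the digraph on [I_e * F_q] with
   [(i, x) -> (l, y)] iff [x - y \in D_i].  There every vertex has [m]
   out-neighbours and [m] in-neighbours in each block, and since
   [D_0, ..., D_(e-1)] partition [F_q^*], the number of 2-paths from [(i, x)]
   to [(j, z)] is [#{y <> z | x - y \in D_i} = m - [x - z \in D_i]], which is
   [A^2 = m I + (m - 1) A + m (J - I - A)]. *)

Lemma expf_card_pred (F : finFieldType) (x : F) : x != 0 -> x ^+ #|F|.-1 = 1.
Proof.
move=> x_neq0; apply: (mulfI x_neq0).
by rewrite -exprS mulr1 prednK ?expf_card // (cardD1 x).
Qed.

Section DiscreteLog.
Variables (F : finFieldType) (gamma : F).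
Hypothesis prim : (#|F|.-1).-primitive_root gamma.

(* [dlog 0 = 0] is a junk value. *)
Definition dlog (x : F) : nat :=
  if [pick k : 'I_#|F|.-1 | gamma ^+ k == x] is Some k then val k else 0.

Lemma prim_root_neq0 : gamma != 0.
Proof.
apply/eqP => gamma0; move: (prim_expr_order prim).
by rewrite gamma0 expr0n eqn0Ngt (prim_order_gt0 prim) => /eqP; rewrite eq_sym oner_eq0.
Qed.

Lemma dlog_lt x : (dlog x < #|F|.-1)%N.
Proof.
rewrite /dlog; case: pickP => [k _|_]; [exact: ltn_ord | exact: prim_order_gt0 prim].
Qed.

Lemma expr_dlog x : x != 0 -> gamma ^+ dlog x = x.
Proof.
move=> x_neq0; rewrite /dlog; case: pickP => [k /eqP // | no_k].
have [k xE] := prim_rootP prim (expf_card_pred x_neq0).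
by move: (no_k k); rewrite -xE eqxx.
Qed.

Lemma dlog_expr k : dlog (gamma ^+ k) = (k %% #|F|.-1)%N.
Proof.
have := expr_dlog (expf_neq0 k prim_root_neq0).
move/eqP; rewrite (eq_prim_root_expr prim) => /eqP <-.
by rewrite modn_small ?dlog_lt.
Qed.

End DiscreteLog.

Lemma sum_indicator (T : finType) (A : {pred T}) :
  \sum_t ((t \in A)%:R : int) = #|A|%:R.
Proof. by rewrite -sumr_const [RHS]big_mkcond; apply: eq_bigr => t _; case: (t \in A). Qed.

Lemma sum_pairE (R : nmodType) (I J : finType) (G : I * J -> R) :
  \sum_p G p = \sum_i \sum_j G (i, j).
Proof. by rewrite pair_bigA; apply: eq_bigr => -[]. Qed.

Lemma sum_subl (R : nmodType) (V : finZmodType) (x : V) (f : V -> R) :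
  \sum_y f (x - y) = \sum_y f y.
Proof. by rewrite [RHS](reindex_inj (inv_inj (subKr x))). Qed.

Lemma sum_subr (R : nmodType) (V : finZmodType) (z : V) (f : V -> R) :
  \sum_y f (y - z) = \sum_y f y.
Proof. by rewrite [RHS](reindex_inj (addIr (- z))). Qed.

Section Cyclotomic.
Variables (F : finFieldType) (gamma : F) (e m : nat).
Hypotheses (prim : (#|F|.-1).-primitive_root gamma) (e_gt0 : (0 < e)%N)
  (card_units : #|F|.-1 = (e * m)%N).
Local Notation D := (cyc_class gamma e).

Definition cyc_index (x : F) : nat := (dlog gamma x %% e)%N.

Lemma cyc_index_expr k : cyc_index (gamma ^+ k) = (k %% e)%N.
Proof.
by rewrite /cyc_index dlog_expr // card_units (modn_dvdm _ (dvdn_mulr _ (dvdnn e))).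
Qed.

Lemma cyc_index_lt x : (cyc_index x < e)%N.
Proof. exact: ltn_pmod. Qed.

Lemma cyc_indexM x y : x != 0 -> y != 0 ->
  cyc_index (x * y) = ((cyc_index x + cyc_index y) %% e)%N.
Proof.
move=> x_neq0 y_neq0.
by rewrite -{1}(expr_dlog prim x_neq0) -{1}(expr_dlog prim y_neq0) -exprD cyc_index_expr modnDm.
Qed.

Lemma expr_cyc_index x : x != 0 ->
  x = gamma ^+ (cyc_index x + e * (dlog gamma x %/ e)).
Proof. by move=> x_neq0; rewrite addnC mulnC -divn_eq expr_dlog. Qed.

Lemma mem_cyc_class i x : (i < e)%N ->
  (x \in D i) = (x != 0) && (cyc_index x == i).
Proof.
move=> lt_i_e; rewrite inE; apply/existsP/andP => [[k /eqP ->] | [x_neq0 /eqP xi]].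
  by rewrite expf_neq0 ?prim_root_neq0 // cyc_index_expr mulnC addnC modnMDl modn_small.
have lt_k : (dlog gamma x %/ e < #|F|)%N.
  by rewrite (leq_ltn_trans (leq_div _ _)) // (leq_trans (dlog_lt prim x)) ?leq_pred.
by exists (Ordinal lt_k); rewrite -xi -expr_cyc_index.
Qed.

Lemma cyc_class0 i : (i < e)%N -> 0 \notin D i.
Proof. by move=> lt_i_e; rewrite mem_cyc_class // eqxx. Qed.

Lemma mem_cyc_class_mull i c x : (i < e)%N -> c \in D i ->
  (c * x \in D i) = (x \in D 0).
Proof.
move=> lt_i_e; rewrite !mem_cyc_class // => /andP[c_neq0 /eqP ci].
have [-> | x_neq0] := eqVneq x 0; first by rewrite mulr0 eqxx.
rewrite mulf_neq0 // cyc_indexM // ci -[X in _ == X](modn_small lt_i_e).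
by rewrite -{2}[i]addn0 eqn_modDl mod0n modn_small ?cyc_index_lt.
Qed.

Lemma card_cyc_class i : (i < e)%N -> #|D i| = m.
Proof.
move=> lt_i_e.
have gamma_inj : injective (fun k : 'I_m => gamma ^+ (i + e * k)).
  move=> k1 k2 /eqP; rewrite (eq_prim_root_expr prim) card_units !modn_small.
  - by move/eqP => eq_k; apply/val_inj => /=; nia.
  - by have := ltn_ord k2; nia.
  - by have := ltn_ord k1; nia.
rewrite -[RHS]card_ord -(card_imset _ gamma_inj); apply: eq_card => x.
rewrite mem_cyc_class //; apply/andP/imsetP => [[x_neq0 /eqP xi] | [k _ ->]].
  have lt_k : (dlog gamma x %/ e < m)%N.
    by rewrite ltn_divLR // mulnC -card_units dlog_lt.
  by exists (Ordinal lt_k); rewrite // -xi -expr_cyc_index.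
rewrite expf_neq0 ?prim_root_neq0 // cyc_index_expr.
by rewrite mulnC addnC modnMDl modn_small.
Qed.

Lemma sum_cyc_class_indicator x :
  \sum_(l < e) ((x \in D l)%:R : int) = (x != 0)%:R.
Proof.
have [-> | x_neq0] := eqVneq x 0.
  by rewrite big1 // => l _; rewrite (negPf (cyc_class0 (ltn_ord l))).
rewrite (bigD1 (Ordinal (cyc_index_lt x))) //= big1 => [|l ne_l].
  by rewrite mem_cyc_class ?cyc_index_lt // x_neq0 eqxx addr0.
rewrite mem_cyc_class // x_neq0 /=; case: eqP => // xl.
by case/eqP: ne_l; apply: val_inj.
Qed.

Definition cyc_adj (u v : 'I_e * F) : int := (u.2 - v.2 \in D u.1)%:R.

Lemma sum_cyc_class_subl i x : (i < e)%N -> \sum_y ((x - y \in D i)%:R : int) = m%:R.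
Proof.
by move=> lt_i_e; rewrite (sum_subl x (fun y => (y \in D i)%:R)) sum_indicator card_cyc_class.
Qed.

Lemma cyc_adj_row_sum u : \sum_v cyc_adj u v = (e * m)%:R.
Proof.
rewrite sum_pairE (eq_bigr (fun _ => m%:R : int)); last first.
  by move=> l _; exact: sum_cyc_class_subl.
by rewrite sumr_const card_ord natrM mulr_natl.
Qed.

Lemma cyc_adj_col_sum w : \sum_u cyc_adj u w = (e * m)%:R.
Proof.
rewrite sum_pairE (eq_bigr (fun _ => m%:R : int)); last first.
  by move=> l _; rewrite (sum_subr w.2 (fun y => (y \in D l)%:R)) sum_indicator card_cyc_class.
by rewrite sumr_const card_ord natrM mulr_natl.
Qed.

(* The second factor summed over the block index is the indicator of [y != z]. *)
Lemma cyc_adj_sqr u w : \sum_v cyc_adj u v * cyc_adj v w = m%:R - cyc_adj u w.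
Proof.
case: u w => i x [j z]; rewrite sum_pairE exchange_big /cyc_adj /=.
under eq_bigr => y _ do rewrite -mulr_sumr sum_cyc_class_indicator // subr_eq0.
rewrite -(sum_cyc_class_subl x (ltn_ord i)) (bigD1 z) //= [in RHS](bigD1 z) //=.
rewrite eqxx mulr0 add0r addrC addrK; apply: eq_bigr => y ne_yz.
by rewrite ne_yz mulr1.
Qed.

Lemma cyc_adj_diag u : cyc_adj u u = 0.
Proof. by rewrite /cyc_adj subrr (negPf (cyc_class0 _)). Qed.



Variable a : 'I_e -> F.
Hypothesis a_cyc : forall i, a i \in D i.

Lemma a_neq0 i : a i != 0.
Proof. by have := a_cyc i; rewrite mem_cyc_class // => /andP[]. Qed.

Definition rescale (u : 'I_e * F) : 'I_e * F := (u.1, a u.1 * u.2).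

Lemma rescale_inj : injective rescale.
Proof. by move=> [i x] [j y] [<-] /(mulfI (a_neq0 i)) ->. Qed.

Lemma sum_rescale (G : 'I_e * F -> int) : \sum_v G (rescale v) = \sum_v G v.
Proof. by rewrite [RHS](reindex_inj rescale_inj). Qed.

Lemma block_adj_rescale u v : block_adj gamma a u v = cyc_adj (rescale u) (rescale v).
Proof.
case: u v => i x [l y]; rewrite /block_adj /Cmx /cyc_adj /=.
rewrite -(mem_cyc_class_mull _ (ltn_ord i) (a_cyc i)) mulrBr !mulrA mulfV ?a_neq0 // mul1r.
by case: (_ \in _).
Qed.

Lemma block_adj_diag u : block_adj gamma a u u = 0.
Proof. by rewrite block_adj_rescale cyc_adj_diag. Qed.

Lemma block_adj_row_sum u : \sum_v block_adj gamma a u v = (e * m)%:R.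
Proof.
under eq_bigr do rewrite block_adj_rescale.
by rewrite (sum_rescale (cyc_adj _)) cyc_adj_row_sum.
Qed.

Lemma block_adj_col_sum w : \sum_u block_adj gamma a u w = (e * m)%:R.
Proof.
under eq_bigr do rewrite block_adj_rescale.
by rewrite (sum_rescale (cyc_adj^~ _)) cyc_adj_col_sum.
Qed.

Lemma block_adj_sqr u w :
  \sum_v block_adj gamma a u v * block_adj gamma a v w = m%:R - block_adj gamma a u w.
Proof.
under eq_bigr do rewrite !block_adj_rescale.
rewrite (sum_rescale (fun v => cyc_adj _ v * cyc_adj v _)).
by rewrite cyc_adj_sqr block_adj_rescale.
Qed.

End Cyclotomic.

Lemma sum_enum_val (R : nmodType) (T : finType) (G : T -> R) :
  \sum_(k < #|T|) G (enum_val k) = \sum_v G v.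
Proof. by rewrite -big_enum_val. Qed.

Lemma is_dsrg_fmx (V : finType) (f : V -> V -> int) (k t lam mu : nat) :
  (forall u v, f u v = 0 \/ f u v = 1) ->
  (forall u, f u u = 0) ->
  (forall u w, \sum_v f u v * f v w =
     t%:Z * (u == w)%:R + lam%:Z * f u w + mu%:Z * (1 - (u == w)%:R - f u w)) ->
  (forall u, \sum_v f u v = k%:Z) ->
  (forall w, \sum_u f u w = k%:Z) ->
  is_dsrg (fmx f) #|V| k t lam mu.
Proof.
move=> f01 f_diag f_sqr f_row f_col; split=> //; split.
- by move=> r c; rewrite mxE.
- by move=> r; rewrite mxE.
- apply/matrixP => r c; rewrite !mxE -(inj_eq enum_val_inj) -f_sqr -[RHS]sum_enum_val.
  by apply: eq_bigr => s _; rewrite !mxE.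
- apply/matrixP => r c; rewrite !mxE mulr1 -(f_row (enum_val r)) -[RHS]sum_enum_val.
  by apply: eq_bigr => s _; rewrite !mxE mulr1.
- apply/matrixP => r c; rewrite !mxE mulr1 -(f_col (enum_val c)) -[RHS]sum_enum_val.
  by apply: eq_bigr => s _; rewrite !mxE mul1r.
Qed.

Theorem mainTheorem11 (F : finFieldType) (gamma : F) (e m : nat)
  (a : 'I_e -> F) :
  (#|F|.-1).-primitive_root gamma ->
  (0 < e)%N -> (0 < m)%N -> #|F| = (e * m + 1)%N ->
  (forall i : 'I_e, nat_of_ord i = 0%N -> a i = 1) ->
  (forall i : 'I_e, a i \in cyc_class gamma e i) ->
  is_dsrg (fmx (block_adj gamma a)) (e * (e * m + 1)) (e * m) m m.-1 m.
Proof.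
move=> prim e_gt0 m_gt0 card_F _ a_cyc.
have card_units : #|F|.-1 = (e * m)%N by rewrite card_F addn1.
have -> : (e * (e * m + 1))%N = #|{: 'I_e * F}| by rewrite card_prod card_ord card_F.
apply: is_dsrg_fmx.
- by move=> u v; rewrite /block_adj /Cmx; case: ifP; [right | left].
- exact: (block_adj_diag prim e_gt0 card_units a_cyc).
- move=> u w; rewrite (block_adj_sqr prim e_gt0 card_units a_cyc) (predn_int m_gt0).
  by ring.
- by move=> u; rewrite (block_adj_row_sum prim e_gt0 card_units a_cyc) natz.
- by move=> w; rewrite (block_adj_col_sum prim e_gt0 card_units a_cyc) natz.
Qed.
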